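(* Let $G=(N,E)$ be a finite DAG with influential set $S^{inf.}(G)=\{s_1,\dots,s_m\}$. Then there is a directed path in $G$ passing through all agents of $S^{inf.}(G)$ in increasing order of their progeny, i.e. visiting $s_m,s_{m-1},\dots,s_1$ in this order. In particular, for all $1\le i<j\le m$, there is a directed path from $s_j$ to $s_i$, i.e. $s_j\in P_{s_i}$.
   Context: In a DAG $G=(N,E)$ with $N=\{1,\dots,n\}$, $P_i$ is the set of nodes having a directed path to $i$ (including $i$), and $p_i=|P_i|$. Write $p_i\succ p_j$ if $p_i>p_j$, or $p_i=p_j$ and $i<j$. Node $i$ is influential if, in the graph obtained from $G$ by deleting all out-edges of $i$, $p_i\succ p_j$ holds for all $j\ne i$ (progeny measured in that modified graph). The influential set $S^{inf.}(G)=\{s_1,\dots,s_m\}$ consists of all influential nodes, indexed so that $p_{s_1}\succ p_{s_2}\succ\cdots\succ p_{s_m}$, with progeny measured in $G$. *)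

From mathcomp Require Import all_boot.
Set Implicit Arguments. Unset Strict Implicit. Unset Printing Implicit Defensive.

(* A directed graph on N = {0,...,n-1} (the paper's {1,...,n}) is an edge
   relation e : rel 'I_n, where e x y means there is an edge x -> y. *)

Definition acyclic (n : nat) (e : rel 'I_n) : Prop :=
  forall x y : 'I_n, e x y -> ~~ connect e y x.

Definition progeny_set (n : nat) (e : rel 'I_n) (i : 'I_n) : {set 'I_n} :=
  [set j | connect e j i].

Definition progeny (n : nat) (e : rel 'I_n) (i : 'I_n) : nat :=
  #|progeny_set e i|.

Definition psucc (n : nat) (e : rel 'I_n) (i j : 'I_n) : bool :=
  (progeny e j < progeny e i) || ((progeny e i == progeny e j) && (i < j)).

Definition del_out (n : nat) (e : rel 'I_n) (i : 'I_n) : rel 'I_n :=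
  fun x y => e x y && (x != i).

Definition influential (n : nat) (e : rel 'I_n) (i : 'I_n) : bool :=
  [forall j : 'I_n, (j != i) ==> psucc (del_out e i) i j].

Definition inf_set (n : nat) (e : rel 'I_n) : {set 'I_n} :=
  [set i | influential e i].

From mathcomp Require Import all_boot.

(* If b is influential and p_a \succ p_b, then b must reach a: otherwise
   deleting the out-edges of b changes neither P_b (a path into b can be cut at
   its first visit to b) nor P_a (no path into a passes through b), so b would
   beat a both in the modified graph and, by asymmetry of \succ, lose to it.
   Consecutive influential nodes in \succ-order are thus joined by nonempty
   paths, and concatenating these gives the walk. *)

Section InfluentialReach.

Set Implicit Arguments.
Unset Strict Implicit.
Variables (n : nat) (e : rel 'I_n).

Lemma connect_del_out_sub (b x y : 'I_n) :
  connect (del_out e b) x y -> connect e x y.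
Proof. by apply: connect_sub => u v /andP[euv _]; apply: connect1. Qed.

Lemma connect_del_out_cases (b x y : 'I_n) :
  connect e x y ->
  connect (del_out e b) x y \/
  connect (del_out e b) x b /\ connect e b y.
Proof.
move=> /connectP[p]; elim: p x => [|z p IHp] x /=; first by move=> _ ->; left.
move=> /andP[exz ezp] ly.
have [<-|xb] := eqVneq x b.
  by right; split; last by apply/connectP; exists (z :: p); rewrite //= exz.
have dxz : connect (del_out e b) x z.
  by apply: connect1; rewrite /del_out exz xb.
case: (IHp z ezp ly) => [dzy|[dzb bzy]].
  by left; apply: connect_trans dxz dzy.
by right; split=> //; apply: connect_trans dxz dzb.
Qed.

Lemma progeny_set_del_out_self (b : 'I_n) :
  progeny_set (del_out e b) b = progeny_set e b.
Proof.
apply/setP=> x; rewrite !inE; apply/idP/idP; first exact: connect_del_out_sub.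
by case/(@connect_del_out_cases b) => [|[]].
Qed.

Lemma progeny_set_del_out (b a : 'I_n) :
  ~~ connect e b a -> progeny_set (del_out e b) a = progeny_set e a.
Proof.
move=> nba; apply/setP=> x; rewrite !inE; apply/idP/idP.
  exact: connect_del_out_sub.
by case/(@connect_del_out_cases b) => [|[_ /(negP nba)]].
Qed.

Lemma psucc_del_out (b a : 'I_n) :
  ~~ connect e b a -> psucc (del_out e b) b a = psucc e b a.
Proof.
move=> nba.
by rewrite /psucc /progeny progeny_set_del_out_self progeny_set_del_out.
Qed.

Lemma psucc_neq (a b : 'I_n) : psucc e a b -> a != b.
Proof. by apply: contraTneq => ->; rewrite /psucc ltnn eqxx ltnn. Qed.

Lemma psucc_asym (a b : 'I_n) :
  psucc e a b -> ~~ psucc e b a.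
Proof.
rewrite /psucc; case: (ltngtP (progeny e a) (progeny e b)) => //= _ ab.
by rewrite -leqNgt ltnW.
Qed.

Lemma influential_connect (a b : 'I_n) :
  b \in inf_set e -> psucc e a b -> connect e b a.
Proof.
rewrite inE => /forallP infl_b ab; apply/negPn/negP => nba.
have := infl_b a; rewrite (psucc_neq ab) psucc_del_out //=.
exact/negP/psucc_asym.
Qed.

End InfluentialReach.

Section WalkThroughConnected.

Set Implicit Arguments.
Variables (T : finType) (e : rel T).

Lemma path_connect_walk (x : T) (t : seq T) :
  path [rel a b | (a != b) && connect e a b] x t ->
  exists2 w, path e x w & subseq t w.
Proof.
elim: t x => [|y t IHt] x /=; first by exists [::].
case/andP=> /andP[xy /connectP[q eq ly]] /IHt[w ew tw].
case/lastP: q eq ly => [|q z] eq; first by move=> /= ly; rewrite ly eqxx in xy.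
rewrite last_rcons => yz; subst z.
exists (rcons q y ++ w); first by rewrite cat_path eq last_rcons.
by rewrite cat_rcons; apply: subseq_trans (suffix_subseq q _); rewrite /= eqxx.
Qed.

Lemma sorted_connect_walk (t : seq T) :
  sorted [rel a b | (a != b) && connect e a b] t ->
  exists2 w, sorted e w & subseq t w.
Proof.
case: t => [|x t /path_connect_walk[w ew tw]]; first by exists [::].
by exists (x :: w); rewrite //= eqxx.
Qed.

End WalkThroughConnected.

Theorem mainTheorem4 (n : nat) (e : rel 'I_n) :
  acyclic e ->
  (forall t : seq 'I_n,
     perm_eq t (enum (inf_set e)) ->
     sorted (fun a b => psucc e b a) t ->
     exists w : seq 'I_n, sorted e w /\ subseq t w)
  /\
  (forall a b : 'I_n, a \in inf_set e -> b \in inf_set e ->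
     psucc e a b -> b \in progeny_set e a).
Proof.
move=> _; split=> [t t_inf t_sorted|a b _ b_inf ab]; last first.
  by rewrite inE; apply: influential_connect.
have t_in : all (mem (inf_set e)) t.
  by apply/allP=> x; rewrite (perm_mem t_inf) mem_enum.
have [|w ew tw] := @sorted_connect_walk _ e t; last by exists w.
apply: sub_in_sorted t_in t_sorted => u v u_inf _ vu /=.
by rewrite eq_sym (psucc_neq vu) (influential_connect u_inf vu).
Qed.
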